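(* For every rooted graph $(F,R)$ and integer $\ell\ge 1$, every $K\in \mathcal{F}^\ell$ satisfies \[e(K)\ge \rho(F,R)\,(v(K)-|R|).\]
   Context: A rooted graph $(F,R)$ is a graph $F$ with a root set $R\subsetneq V(F)$. $\mathcal{F}^\ell$ is the set of all graphs obtained as the union of $\ell$ distinct labeled copies of $F$ which all agree on the root set $R$. For $S\subseteq V(F)$, $e_S(F)$ is the number of edges of $F$ incident to a vertex of $S$, and $\rho(F,R)=\min_{\emptyset\ne S\subseteq V(F)\setminus R} e_S(F)/|S|$. $e(K)$ and $v(K)$ denote the numbers of edges and vertices of $K$. *)

From mathcomp Require Import all_boot all_order all_algebra.
Set Implicit Arguments. Unset Strict Implicit. Unset Printing Implicit Defensive.
Import Order.TTheory GRing.Theory Num.Theory.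

Definition edges (V : finType) (adj : rel V) : {set {set V}} :=
  [set [set x; y] | x in [set: V], y in [set: V] & adj x y].

Definition eS (V : finType) (adj : rel V) (S : {set V}) : nat :=
  #|[set f in edges adj | f :&: S != set0]|.

Definition ratioS (V : finType) (adj : rel V) (S : {set V}) : rat :=
  (eS adj S)%:R / (#|S|)%:R.

(* rho(F,R) = min over nonempty S subseteq V(F)\R of e_S(F)/|S|.
   The seed value ratioS adj (~: R) is itself one of the minimized values
   (when R is a proper subset), so this is exactly the minimum. *)
Definition rho (V : finType) (adj : rel V) (R : {set V}) : rat :=
  \big[Order.min/ratioS adj (~: R)]_(S : {set V} | (S != set0) && (S \subset ~: R))
     ratioS adj S.

(* A labeled copy of F in a host vertex set U: an injective map phi : V -> U;
   its vertex image and edge image. *)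
Definition copy_verts (V U : finType) (phi : V -> U) : {set U} :=
  phi @: [set: V].

Definition copy_edges (V U : finType) (adj : rel V) (phi : V -> U) : {set {set U}} :=
  [set [set phi x; phi y] | x in [set: V], y in [set: V] & adj x y].

Definition union_verts (V U : finType) (l : nat) (phi : 'I_l -> V -> U) : {set U} :=
  \bigcup_(i < l) copy_verts (phi i).

Definition union_edges (V U : finType) (adj : rel V) (l : nat) (phi : 'I_l -> V -> U)
  : {set {set U}} :=
  \bigcup_(i < l) copy_edges adj (phi i).

From mathcomp Require Import all_boot all_order all_algebra.
Import Order.TTheory GRing.Theory Num.Theory.
Local Open Scope ring_scope.

(* Add the copies one at a time.  The vertices contributed by a new copy [f]
   form a set [S] of non-root vertices of [F], and every edge of [F] meeting
   [S] is mapped to an edge of [K] through a new vertex, so the edge count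
   grows by at least [e_S(F) >= rho(F,R) |S|] while the vertex count grows by
   exactly [|S|]. *)

Section CopyCounting.

Variables (V U : finType) (adj : rel V) (R : {set V}).

Lemma rho_mul_card_le_eS (S : {set V}) :
  S \subset ~: R -> rho adj R * #|S|%:R <= (eS adj S)%:R.
Proof.
move=> sSR; have [->|S0] := eqVneq S set0; first by rewrite cards0 mulr0.
have rho_le : rho adj R <= ratioS adj S by apply: bigmin_le_cond; rewrite S0.
have S_neq0 : #|S|%:R != 0 :> rat by rewrite pnatr_eq0 cards_eq0.
by rewrite -(divfK S_neq0 (eS adj S)%:R) ler_wpM2r.
Qed.

Lemma copy_edgesE (f : V -> U) :
  copy_edges adj f = (fun e : {set V} => f @: e) @: edges adj.
Proof.
have imset_set2 x y : f @: [set x; y] = [set f x; f y].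
  by rewrite imsetU1 imset_set1.
apply/setP => E; apply/imset2P/imsetP => [[x y _]|[e /imset2P[x y _]]].
  rewrite !inE => xy ->; exists [set x; y]; last by rewrite /= imset_set2.
  by apply/imset2P; exists x y; rewrite ?inE.
by rewrite !inE => xy -> ->; exists x y; rewrite ?inE ?imset_set2.
Qed.

Lemma copy_edges_sub_powerset (f : V -> U) :
  copy_edges adj f \subset powerset (copy_verts f).
Proof.
apply/subsetP => _ /imset2P[x y _ _ ->]; rewrite powersetE.
by apply/subsetP => z; rewrite !inE => /orP[]/eqP->; rewrite imset_f.
Qed.

Definition new_verts (f : V -> U) (W : {set U}) : {set V} := [set v | f v \notin W].

Lemma new_verts_sub_nonroots (f : V -> U) (W : {set U}) :
  f @: R \subset W -> new_verts f W \subset ~: R.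
Proof.
move=> sfRW; apply/subsetP => v; rewrite !inE; apply: contra => vR.
by rewrite (subsetP sfRW) ?imset_f.
Qed.

Lemma card_setU_copy_verts (f : V -> U) (W : {set U}) : injective f ->
  #|W :|: copy_verts f| = (#|W| + #|new_verts f W|)%N.
Proof.
move=> injf.
have -> : W :|: copy_verts f = W :|: f @: new_verts f W.
  apply/setP => u; rewrite !inE; case: (boolP (u \in W)) => //= uW.
  by apply/imsetP/imsetP => -[v _ uE]; exists v; rewrite // ?inE -?uE.
rewrite cardsU card_imset //; suff -> : W :&: f @: new_verts f W = set0.
  by rewrite cards0 subn0.
apply/setP => u; rewrite !inE; apply/andP => -[uW /imsetP[v]].
by rewrite inE => fvW uE; rewrite -uE uW in fvW.
Qed.

(* The images of the edges of [F] meeting [new_verts f W] are edges of the new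
   copy that cannot lie inside [W]. *)
Lemma card_setU_copy_edges (f : V -> U) (W : {set U}) (E : {set {set U}}) :
  injective f -> E \subset powerset W ->
  (#|E| + eS adj (new_verts f W) <= #|E :|: copy_edges adj f|)%N.
Proof.
move=> injf sEW; set S := new_verts f W.
set Enew := (fun e : {set V} => f @: e) @:
  [set e in edges adj | e :&: S != set0].
have card_Enew : #|Enew| = eS adj S by rewrite card_imset //; apply: imset_inj.
have disj : E :&: Enew = set0.
  apply/setP => e'; rewrite !inE; apply/andP => -[e'E /imsetP[e]].
  rewrite inE => /andP[_ /set0Pn[v]]; rewrite !inE => /andP[ve fvW] e'_def.
  have := subsetP sEW _ e'E; rewrite powersetE e'_def.
  by move=> /subsetP/(_ (f v) (imset_f f ve)); rewrite (negbTE fvW).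
have card_union : #|E :|: Enew| = (#|E| + #|Enew|)%N.
  by rewrite cardsU disj cards0 subn0.
rewrite -card_Enew -card_union subset_leq_card // setUS //.
by rewrite copy_edgesE imsetS // setIdE subsetIl.
Qed.

Lemma rho_bound_setU_copy (f : V -> U) (W : {set U}) (E : {set {set U}}) :
  injective f -> f @: R \subset W -> E \subset powerset W ->
  rho adj R * (#|W|%:R - #|R|%:R) <= #|E|%:R ->
  rho adj R * (#|W :|: copy_verts f|%:R - #|R|%:R)
    <= #|E :|: copy_edges adj f|%:R.
Proof.
move=> injf sfRW sEW bound_WE.
have := card_setU_copy_edges _ _ _ injf sEW; rewrite -(ler_nat rat) natrD.
apply: le_trans; rewrite card_setU_copy_verts // natrD addrAC mulrDr.
by rewrite lerD // rho_mul_card_le_eS // new_verts_sub_nonroots.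
Qed.

Lemma rho_bound_bigcup_copies (I : finType) (f0 : V -> U) (phi : I -> V -> U) :
  injective f0 -> (forall i, injective (phi i)) ->
  (forall i r, r \in R -> phi i r = f0 r) ->
  rho adj R * (#|f0 @: R :|: \bigcup_i copy_verts (phi i)|%:R - #|R|%:R)
    <= #|\bigcup_i copy_edges adj (phi i)|%:R.
Proof.
move=> injf0 injphi agree.
pose invariant (W : {set U}) (E : {set {set U}}) := let W' := f0 @: R :|: W in
  rho adj R * (#|W'|%:R - #|R|%:R) <= #|E|%:R /\ E \subset powerset W'.
suff [] : invariant (\bigcup_i copy_verts (phi i)) (\bigcup_i copy_edges adj (phi i)).
  by [].
apply: (big_rec2 invariant) => [|i W E _ [bound_WE sEW]].
  by rewrite /invariant setU0 card_imset // subrr mulr0 sub0set.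
have sfRW : phi i @: R \subset f0 @: R :|: W.
  by apply/subsetP => _ /imsetP[r rR ->]; rewrite agree // inE imset_f.
rewrite /invariant setUCA [copy_verts _ :|: _]setUC [copy_edges _ _ :|: _]setUC.
split; first exact: rho_bound_setU_copy.
rewrite subUset (subset_trans sEW) ?powersetS ?subsetUl //=.
by rewrite (subset_trans (copy_edges_sub_powerset _)) ?powersetS ?subsetUr.
Qed.

End CopyCounting.

Theorem lemma4p1 (V : finType) (adj : rel V) (R : {set V})
    (U : finType) (l : nat) (phi : 'I_l -> V -> U) :
  symmetric adj -> irreflexive adj ->
  R \proper [set: V] ->
  (1 <= l)%N ->
  (forall i, injective (phi i)) ->
  (forall i j r, r \in R -> phi i r = phi j r) ->
  (forall i j, i != j ->
     (copy_verts (phi i), copy_edges adj (phi i))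
       != (copy_verts (phi j), copy_edges adj (phi j))) ->
  rho adj R * ((#|union_verts phi|)%:R - (#|R|)%:R)
    <= (#|union_edges adj phi|)%:R :> rat.
Proof.
move=> _ _ _ l_gt0 injphi agree _.
pose i0 : 'I_l := Ordinal l_gt0.
have sRK : phi i0 @: R \subset union_verts phi.
  by apply: subset_trans (bigcup_sup i0 isT); rewrite imsetS ?subsetT.
rewrite -(setUidPr sRK).
by apply: rho_bound_bigcup_copies => // i r rR; apply: agree.
Qed.
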